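(* Let $s_{n,j}$ be the number of decorated partial Dyck paths consisting of $n$ steps and ending at level $j$, and let $S(z,u)=\sum_{n,j\ge0}s_{n,j}z^nu^j$. Put $W=\sqrt{1-6z^2+5z^4}$, with the branch satisfying $W=1$ at $z=0$, and $$r_1=\frac{1+z^2+W}{2z}.$$ Then $$S(z,u)=\frac{3-3z^2-W}{2zr_1(1-u/r_1)},$$ and for every $j\ge0$, $$[u^j]S(z,u)=\frac{3-3z^2-W}{2zr_1^{j+1}}.$$
   Context: A decorated (partial) Dyck path is a lattice path with the following properties. - It starts at $(0,0)$. - It uses up-steps $(1,1)$ and down-steps $(1,-1)$. - Each down-step is coloured either black or red. - It never goes below the $x$-axis. - An up-step is never immediately followed by a red down-step, and a red down-step is never immediately followed by an up-step. The path need not return to the $x$-axis; its level is the final $y$-coordinate. The empty path counts, with $n=0$ and $j=0$. These paths are equivalent to prefixes of skew Dyck paths, with a red down-step encoding a step $(-1,-1)$. *)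

From Stdlib Require Import Reals.
From Coquelicot Require Import Coquelicot.
From HB Require Import structures.
From mathcomp Require Import all_boot.
Local Open Scope nat_scope.

Set Implicit Arguments.
Unset Strict Implicit.
Unset Printing Implicit Defensive.

(* Steps of a decorated path: up-step (1,1), black down-step, red down-step. *)
Inductive step := Up | DownB | DownR.

Definition step_enc (s : step) : option bool :=
  match s with Up => None | DownB => Some true | DownR => Some false end.
Definition step_dec (o : option bool) : option step :=
  Some (match o with None => Up | Some true => DownB | Some false => DownR end).
Lemma step_encK : pcancel step_enc step_dec. Proof. by case. Qed.

HB.instance Definition _ := Finite.copy step (pcan_type step_encK).

Definition ups (w : seq step) : nat := count (pred1 Up) w.
Definition downs (w : seq step) : nat := count (fun s => s != Up) w.

Definition never_below (w : seq step) : bool :=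
  all (fun k => downs (take k w) <= ups (take k w)) (iota 0 (size w).+1).

Definition adj_ok (a b : step) : bool :=
  ~~ ((a == Up) && (b == DownR)) && ~~ ((a == DownR) && (b == Up)).
Definition no_bad_adj (w : seq step) : bool :=
  all (fun p => adj_ok p.1 p.2) (zip w (behead w)).

Definition decorated (w : seq step) : bool := never_below w && no_bad_adj w.

(* final level (meaningful when never_below w) *)
Definition level (w : seq step) : nat := ups w - downs w.

Definition s (n j : nat) : nat :=
  #|[set t : n.-tuple step | decorated t && (level t == j)]|.

(* Classify decorated paths by level and last step.  For |u| <= 1 and |z| < 1/3
   the generating functions T j t of the paths ending with t at level at least j,
   with u marking the excess of the level over j, form a bounded fixed point of
   T = [empty path] + z L T, where L (appending one step) at most triples the sup
   norm; so this fixed point is unique.  The geometric ansatz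
   T j t = c_t q^j / (1 - u q) with (c_Up, c_DownB, c_DownR) = (1, d, r) is a fixed
   point as soon as q = z (1 + d), d = z q (1 + d + r) and r = z q (d + r), which
   q = 2z/D, d = (1 - z^2 - W)/D, r = (1 - 3z^2 - W)/D with D = 1 + z^2 + W solve.
   Summing over t and using r1 = 1/q gives (3 - 3z^2 - W) / (2 z r1^(j+1) (1 - u/r1)),
   whose cases j = 0 and u = 0 are the two claims. *)

From Stdlib Require Import Reals Lra Psatz.
From Coquelicot Require Import Coquelicot.
From mathcomp Require Import all_boot zify.

Local Open Scope nat_scope.

(* The empty path is classified with the paths ending with an up-step: neither
   can be followed by a red down-step (the empty path because it is at level 0). *)
Definition ends_at (j : nat) (t : step) (w : seq step) : bool :=
  [&& decorated w, level w == j & last Up w == t].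

Lemma ups_rcons w x : ups (rcons w x) = ups w + (x == Up).
Proof. by rewrite /ups -cats1 count_cat /= addn0. Qed.

Lemma downs_rcons w x : downs (rcons w x) = downs w + (x != Up).
Proof. by rewrite /downs -cats1 count_cat /= addn0. Qed.

Lemma never_below_downs_le w : never_below w -> downs w <= ups w.
Proof. by move=> /allP /(_ (size w)); rewrite mem_iota ltnSn take_size; apply. Qed.

Lemma never_below_rcons w x :
  never_below (rcons w x) = never_below w && (downs (rcons w x) <= ups (rcons w x)).
Proof.
rewrite /never_below size_rcons -addn1 iotaD all_cat add0n all_seq1.
congr andb; last by rewrite take_oversize // size_rcons.
apply: eq_in_all => k; rewrite mem_iota add0n => /andP[_ lt_k].
by rewrite -cats1 takel_cat.
Qed.

Lemma no_bad_adj_rcons w x :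
  no_bad_adj (rcons w x) = no_bad_adj w && ((w == [::]) || adj_ok (last Up w) x).
Proof.
have no_bad_adj_cons a v : no_bad_adj (a :: v) = path adj_ok a v.
  by elim: v a => [|b v IH] a //=; rewrite /no_bad_adj /= -IH.
by case: w => [|a w] //=; rewrite !no_bad_adj_cons rcons_path.
Qed.

Lemma ends_at_rcons j t w x :
  ends_at j t (rcons w x) =
  [&& decorated w, x == t, adj_ok (last Up w) x &
      if x is Up then (level w).+1 == j else level w == j.+1].
Proof.
rewrite /ends_at /decorated /level never_below_rcons no_bad_adj_rcons last_rcons
  ups_rcons downs_rcons.
case nb: (never_below w) => //=.
have le_du := never_below_downs_le w nb.
have [->|_] /= := eqVneq w [::]; first by case: x => //=; rewrite andbC.
case: (no_bad_adj w) (adj_ok (last Up w) x) (x == t) => [] [] [] /=; rewrite ?andbF //.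
by case: x => /=; apply/idP/idP; lia.
Qed.

Fixpoint npaths (n j : nat) (t : step) : nat :=
  if n is n'.+1 then
    match t with
    | Up => if j is j'.+1 then npaths n' j' Up + npaths n' j' DownB else 0
    | DownB => npaths n' j.+1 Up + npaths n' j.+1 DownB + npaths n' j.+1 DownR
    | DownR => npaths n' j.+1 DownB + npaths n' j.+1 DownR
    end
  else (j == 0) && (t == Up).

Lemma npaths_gt n j t : n < j -> npaths n j t = 0.
Proof.
elim: n j t => [|n IH] [|j] t //= lt_nj.
by case: t; rewrite !IH //; lia.
Qed.

Fixpoint words (n : nat) : seq (seq step) :=
  if n is n'.+1 then [seq rcons w x | w <- words n', x <- [:: Up; DownB; DownR]]
  else [:: [::]].

Lemma mem_words n w : (w \in words n) = (size w == n).
Proof.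
elim: n w => [|n IH] w; first by case: w.
apply/allpairsP/idP => [[[v x] [/= v_in _ ->]]|]; first by rewrite size_rcons eqSS -IH.
case/lastP: w => [//|v x]; rewrite size_rcons eqSS -IH => v_in.
by exists (v, x); split=> //; case: x.
Qed.

Lemma uniq_words n : uniq (words n).
Proof.
elim: n => [|n IH] //.
by apply: allpairs_uniq => // [[v x] [v' x']] _ _ /= /rcons_inj.
Qed.

Lemma card_tuple_words n (p : pred (seq step)) :
  #|[set w : n.-tuple step | p w]| = count p (words n).
Proof.
rewrite cardsE cardE -(size_map val) -size_filter.
apply: perm_size; apply: uniq_perm.
- by rewrite (map_inj_uniq val_inj) enum_uniq.
- by rewrite filter_uniq ?uniq_words.
move=> w; rewrite mem_filter mem_words; apply/mapP/idP => [[v]|/andP[pw /eqP size_w]].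
  by rewrite mem_enum => pv ->; rewrite size_tuple eqxx andbT.
by exists (Tuple (introT eqP size_w)); rewrite ?mem_enum.
Qed.

Lemma count_sum T (p : pred T) s : count p s = \sum_(x <- s) p x.
Proof. by rewrite -sumn_count sumnE big_map. Qed.

Lemma count_ends_at n j t : count (ends_at j t) (words n) = npaths n j t.
Proof.
elim: n j t => [|n IH] j t; first by case: j; case: t.
rewrite count_sum big_allpairs_dep.
case: t j => [[|j]|j|j] /=; rewrite -?IH ?count_sum -?big_split /=;
  [apply: big1 | apply: eq_bigr ..] => w _;
  rewrite !big_cons big_nil !ends_at_rcons /ends_at /=.
all: by case: (decorated w) (last Up w) => [] [] //=; rewrite ?eqSS ?andbT; case: (_ == _).
Qed.

Lemma s_npaths n j : s n j = npaths n j Up + npaths n j DownB + npaths n j DownR.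
Proof.
rewrite /s (card_tuple_words n (fun w => decorated w && (level w == j))).
rewrite -!count_ends_at !count_sum -!big_split.
by apply: eq_bigr => w _; rewrite /ends_at; case: (decorated w) (level w == j) (last Up w) => [] [] [].
Qed.

Local Open Scope R_scope.

Lemma contracting_bounded_eq0 (I : Type) (E : I -> R) (k K : R) :
  0 <= k < 1 -> (forall i, Rabs (E i) <= K) ->
  (forall M, (forall i, Rabs (E i) <= M) -> forall i, Rabs (E i) <= k * M) ->
  forall i, E i = 0.
Proof.
move=> k_range E_le_K contract i.
have E_le_pow n : forall i, Rabs (E i) <= k ^ n * K.
  elim: n => [|n IH] i'; first by rewrite Rmult_1_l.
  by rewrite /= Rmult_assoc; apply: contract.
apply: Rabs_eq_0; apply: Rle_antisym; last exact: Rabs_pos.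
have lim_pow : is_lim_seq (fun n => k ^ n * K) 0.
  have k_abs : Rabs k < 1 by rewrite Rabs_pos_eq; lra.
  by have := is_lim_seq_scal_r _ K _ (is_lim_seq_geom k k_abs); rewrite /= Rmult_0_l.
exact: (is_lim_seq_le _ _ _ _ (E_le_pow ^~ i) (is_lim_seq_const _) lim_pow).
Qed.

Lemma is_series_shift (a : nat -> R) l l' :
  is_series a l -> is_series (fun n => a n.+1) l' -> l = a 0%nat + l'.
Proof.
move=> sum_a sum_a'; rewrite -(is_series_unique _ _ sum_a).
apply: is_series_unique; apply: is_series_decr_1.
change (is_series (fun n => a n.+1) (a 0%nat + l' - a 0%nat)).
have -> : a 0%nat + l' - a 0%nat = l' by ring.
exact: sum_a'.
Qed.

Definition empty_path (j : nat) (t : step) : R :=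
  if t is Up then (if j is 0%nat then 1 else 0) else 0.

(* Reading [F j t] as a count of paths ending with [t] at level [j + i] with weight
   [u ^ i], [transfer u F] counts their one-step extensions. *)
Definition transfer (u : R) (F : nat -> step -> R) (j : nat) (t : step) : R :=
  match t with
  | Up => if j is j'.+1 then F j' Up + F j' DownB else u * (F 0%nat Up + F 0%nat DownB)
  | DownB => F j.+1 Up + F j.+1 DownB + F j.+1 DownR
  | DownR => F j.+1 DownB + F j.+1 DownR
  end.

Lemma transferZ u c F j t :
  transfer u (fun j t => c * F j t) j t = c * transfer u F j t.
Proof. by case: t; case: j => *; rewrite /=; ring. Qed.

Lemma transferB u F G j t :
  transfer u (fun j t => F j t - G j t) j t = transfer u F j t - transfer u G j t.
Proof. by case: t; case: j => *; rewrite /=; ring. Qed.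

Lemma transfer_bound u M F j t : Rabs u <= 1 -> (forall j t, Rabs (F j t) <= M) ->
  Rabs (transfer u F j t) <= 3 * M.
Proof.
move=> u_le1 F_le.
have M_ge0 : 0 <= M := Rle_trans _ _ _ (Rabs_pos _) (F_le 0%nat Up).
have sum2 j1 t1 j2 t2 : Rabs (F j1 t1 + F j2 t2) <= 2 * M.
  by apply: Rle_trans (Rabs_triang _ _) _; have := F_le j1 t1; have := F_le j2 t2; lra.
case: t; [case: j => [|j] | |] => /=.
- rewrite Rabs_mult; have := sum2 0%nat Up 0%nat DownB.
  by have := Rabs_pos (F 0%nat Up + F 0%nat DownB); nra.
- by have := sum2 j Up j DownB; lra.
- apply: Rle_trans (Rabs_triang _ _) _.
  by have := sum2 j.+1 Up j.+1 DownB; have := F_le j.+1 DownR; lra.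
- by have := sum2 j.+1 DownB j.+1 DownR; lra.
Qed.

Lemma is_series_transfer u (F : nat -> nat -> step -> R) L j t :
  (forall j t, is_series (F ^~ j ^~ t) (L j t)) ->
  is_series (fun n => transfer u (F n) j t) (transfer u L j t).
Proof.
move=> sum_F.
case: t; [case: j => [|j] | |]; rewrite /=;
  try (apply: is_series_scal_l); repeat apply: is_series_plus; exact: sum_F.
Qed.

Definition tail_poly (u : R) (n j : nat) (t : step) : R :=
  sum_f_R0 (fun i => INR (npaths n (i + j) t) * u ^ i) n.

Lemma tail_poly0 u j t : tail_poly u 0 j t = empty_path j t.
Proof. by rewrite /tail_poly /=; case: j; case: t => *; rewrite /= ?Rmult_1_r. Qed.

Lemma tail_poly_succ u n j t : tail_poly u n.+1 j t = transfer u (tail_poly u n) j t.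
Proof.
rewrite /tail_poly.
case: t; [case: j => [|j] | |].
- rewrite decomp_sum; last exact/ltP.
  rewrite /= Rmult_0_l Rplus_0_l -plus_sum scal_sum.
  by apply: PartSum.sum_eq => i _; rewrite !addn0 plus_INR /=; ring.
all: rewrite tech5 /= !npaths_gt ?Rmult_0_l ?Rplus_0_r -?plus_sum; try lia.
all: by apply: PartSum.sum_eq => i _; rewrite !addnS /= ?plus_INR; ring.
Qed.

Lemma tail_poly_bound u n j t : Rabs u <= 1 -> Rabs (tail_poly u n j t) <= 3 ^ n.
Proof.
move=> u_le1; elim: n j t => [|n IH] j t.
  by rewrite tail_poly0 /empty_path; case: j; case: t => *; rewrite ?Rabs_R1 ?Rabs_R0 /=; lra.
by rewrite tail_poly_succ; apply: transfer_bound.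
Qed.

Lemma sum_tail_poly u n j :
  tail_poly u n j Up + tail_poly u n j DownB + tail_poly u n j DownR =
  sum_f_R0 (fun i => INR (s n (i + j)) * u ^ i) n.
Proof.
rewrite /tail_poly -!plus_sum; apply: PartSum.sum_eq => i _.
by rewrite s_npaths !plus_INR; ring.
Qed.

Definition tail_gf (u z : R) (j : nat) (t : step) : R :=
  Series (fun n => tail_poly u n j t * z ^ n).

Section TailSeries.

Variables u z : R.
Hypothesis u_le1 : Rabs u <= 1.
Hypothesis z_small : Rabs z < / 3.

Lemma is_series_geom3 : is_series (fun n => (3 * Rabs z) ^ n) (/ (1 - 3 * Rabs z)).
Proof. by apply: is_series_geom; rewrite Rabs_pos_eq; have := Rabs_pos z; lra. Qed.

Lemma tail_term_bound n j t : Rabs (tail_poly u n j t * z ^ n) <= (3 * Rabs z) ^ n.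
Proof.
rewrite Rabs_mult -RPow_abs Rpow_mult_distr.
apply: Rmult_le_compat_r; first exact/pow_le/Rabs_pos.
exact: tail_poly_bound.
Qed.

Lemma ex_series_tail_abs j t : ex_series (fun n => Rabs (tail_poly u n j t * z ^ n)).
Proof.
apply: (ex_series_le _ _ _ (ex_intro _ _ is_series_geom3)) => n.
by rewrite /norm /= /abs /= Rabs_Rabsolu; exact: tail_term_bound.
Qed.

Lemma is_series_tail_gf j t : is_series (fun n => tail_poly u n j t * z ^ n) (tail_gf u z j t).
Proof. exact/Series_correct/ex_series_Rabs/ex_series_tail_abs. Qed.

Lemma tail_gf_bound j t : Rabs (tail_gf u z j t) <= / (1 - 3 * Rabs z).
Proof.
apply: Rle_trans (Series_Rabs _ (ex_series_tail_abs j t)) _.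
rewrite -(is_series_unique _ _ is_series_geom3).
apply: Series_le => [n|]; last exact: ex_intro _ _ is_series_geom3.
by split; [exact: Rabs_pos | exact: tail_term_bound].
Qed.

Lemma tail_gf_fixpoint j t : tail_gf u z j t = empty_path j t + z * transfer u (tail_gf u z) j t.
Proof.
rewrite (is_series_shift _ _ (z * transfer u (tail_gf u z) j t) (is_series_tail_gf j t)).
  by rewrite tail_poly0 /= Rmult_1_r.
apply: (is_series_ext (fun n => z * transfer u (fun j t => z ^ n * tail_poly u n j t) j t)).
  by move=> n; rewrite transferZ tail_poly_succ /=; ring.
apply: is_series_scal_l; apply: is_series_transfer => j' t'.
by apply: is_series_ext (is_series_tail_gf j' t') => n; rewrite Rmult_comm.
Qed.

Lemma is_series_s_tail_gf j :
  is_series (fun n => sum_f_R0 (fun i => INR (s n (i + j)) * u ^ i) n * z ^ n)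
    (tail_gf u z j Up + tail_gf u z j DownB + tail_gf u z j DownR).
Proof.
have sum_Up_DownB := is_series_plus _ _ _ _ (is_series_tail_gf j Up) (is_series_tail_gf j DownB).
apply: is_series_ext (is_series_plus _ _ _ _ sum_Up_DownB (is_series_tail_gf j DownR)) => n.
by rewrite -sum_tail_poly /plus /=; ring.
Qed.

End TailSeries.

Definition bounded (F : nat -> step -> R) : Prop := exists K, forall j t, Rabs (F j t) <= K.

Lemma transfer_fixpoint_unique u z S F G : Rabs u <= 1 -> Rabs z < / 3 ->
  bounded F -> bounded G ->
  (forall j t, F j t = S j t + z * transfer u F j t) ->
  (forall j t, G j t = S j t + z * transfer u G j t) ->
  forall j t, F j t = G j t.
Proof.
move=> u_le1 z_small [KF F_le] [KG G_le] F_fix G_fix j t.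
suff : F j t - G j t = 0 by lra.
pose E (p : nat * step) := F p.1 p.2 - G p.1 p.2.
apply: (contracting_bounded_eq0 _ E (3 * Rabs z) (KF + KG) _ _ _ (j, t)).
- by have := Rabs_pos z; lra.
- move=> [j' t']; apply: Rle_trans (Rabs_triang _ _) _; rewrite Rabs_Ropp.
  exact: Rplus_le_compat.
move=> M E_le [j' t']; rewrite /E /= F_fix G_fix.
have -> : S j' t' + z * transfer u F j' t' - (S j' t' + z * transfer u G j' t') =
    z * transfer u (fun j t => F j t - G j t) j' t' by rewrite transferB; ring.
rewrite Rabs_mult (Rmult_comm 3) Rmult_assoc; apply: Rmult_le_compat_l; first exact: Rabs_pos.
by apply: transfer_bound => // j'' t''; apply: (E_le (j'', t'')).
Qed.

Definition geom_sol (u q d r : R) (j : nat) (t : step) : R :=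
  (match t with Up => 1 | DownB => d | DownR => r end) * q ^ j / (1 - u * q).

Lemma geom_sol_fixpoint u z q d r :
  q = z * (1 + d) -> d = z * q * (1 + d + r) -> r = z * q * (d + r) -> 1 - u * q <> 0 ->
  forall j t, geom_sol u q d r j t = empty_path j t + z * transfer u (geom_sol u q d r) j t.
Proof.
move=> q_eq d_eq r_eq uq_neq1 j t; rewrite /geom_sol /empty_path.
case: t; [case: j => [|j] | |] => /=.
- by field_simplify_eq => //; rewrite q_eq; ring.
- by rewrite {1}q_eq; field.
- by rewrite {1}d_eq; field.
- by rewrite {1}r_eq; field.
Qed.

Lemma geom_sol_bounded u q d r : Rabs q <= 1 -> 1 - u * q <> 0 -> bounded (geom_sol u q d r).
Proof.
move=> q_le1 uq_neq1.
exists ((1 + Rabs d + Rabs r) / Rabs (1 - u * q)) => j t.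
have inv_pos : 0 < / Rabs (1 - u * q) by apply/Rinv_0_lt_compat/Rabs_pos_lt.
have qj_le1 : Rabs (q ^ j) <= 1.
  by rewrite -RPow_abs -(pow1 j); apply: pow_incr; split => //; exact: Rabs_pos.
have := Rabs_pos d; have := Rabs_pos r; have := Rabs_pos (q ^ j).
rewrite /geom_sol /Rdiv !Rabs_mult Rabs_inv.
by case: t; rewrite ?Rabs_R1 => *; apply: Rmult_le_compat_r; nra.
Qed.

(* Both square roots [W] solve the system; [W >= 0] is only needed for [|q| <= 1]. *)
Lemma kernel_system z W : W ^ 2 = 1 - 6 * z ^ 2 + 5 * z ^ 4 -> 1 + z ^ 2 + W <> 0 ->
  let D := 1 + z ^ 2 + W in
  let q := 2 * z / D in
  let d := (1 - z ^ 2 - W) / D in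
  let r := (1 - 3 * z ^ 2 - W) / D in
  [/\ q = z * (1 + d), d = z * q * (1 + d + r) & r = z * q * (d + r)].
Proof.
move=> W_sq D_neq0 D q d r; rewrite /q /d /r /D.
split; field_simplify_eq => //; nra.
Qed.

Section KernelRoot.

Variables z W : R.
Hypothesis W_ge0 : 0 <= W.
Hypothesis W_sq : W ^ 2 = 1 - 6 * z ^ 2 + 5 * z ^ 4.
Hypothesis z_small : Rabs z < / 3.

Let D := 1 + z ^ 2 + W.
Let q := 2 * z / D.

Lemma kernel_root_bounds u : Rabs u <= 1 -> [/\ D <> 0, Rabs q <= 1 & 1 - u * q <> 0].
Proof.
move=> u_le1.
have D_ge1 : 1 <= D by rewrite /D; nra.
have q_small : Rabs q <= 2 * Rabs z.
  rewrite /q Rabs_div ?Rabs_mult ?(Rabs_pos_eq 2) ?(Rabs_pos_eq D); try lra.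
  by apply/Rle_div_l; have := Rabs_pos z; nra.
have uq_small : Rabs (u * q) < 1.
  by rewrite Rabs_mult; have := Rabs_pos u; have := Rabs_pos q; nra.
by split; [lra | lra | move: uq_small; rewrite Rabs_lt_between; lra].
Qed.

Lemma tail_gf_closed_form u j t : Rabs u <= 1 ->
  tail_gf u z j t = geom_sol u q ((1 - z ^ 2 - W) / D) ((1 - 3 * z ^ 2 - W) / D) j t.
Proof.
move=> u_le1; have [D_neq0 q_le1 uq_neq1] := kernel_root_bounds u u_le1.
have [q_eq d_eq r_eq] := kernel_system z W W_sq D_neq0.
apply: (transfer_fixpoint_unique u z) => //.
- by exists (/ (1 - 3 * Rabs z)); apply: tail_gf_bound.
- exact: geom_sol_bounded.
- exact: tail_gf_fixpoint.
- exact: geom_sol_fixpoint.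
Qed.

Hypothesis z_neq0 : z <> 0.

Let r1 := D / (2 * z).

Lemma tail_gf_sum u j : Rabs u <= 1 ->
  tail_gf u z j Up + tail_gf u z j DownB + tail_gf u z j DownR =
  (3 - 3 * z ^ 2 - W) / (2 * z * r1 ^ (j + 1) * (1 - u / r1)).
Proof.
move=> u_le1; have [D_neq0 _ uq_neq1] := kernel_root_bounds u u_le1.
have D_r1 : D = 2 * z * r1 by rewrite /r1; field.
have q_r1 : q = / r1 by rewrite /q /r1; field.
have r1_neq0 : r1 <> 0 by move=> r1_0; apply: D_neq0; rewrite D_r1 r1_0 Rmult_0_r.
have r1_neq_u : r1 - u <> 0.
  by move=> r1_u; apply: uq_neq1; rewrite q_r1 (_ : u = r1); [field | lra].
have num : 3 - 3 * z ^ 2 - W = D + (1 - z ^ 2 - W) + (1 - 3 * z ^ 2 - W) by rewrite /D; ring.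
rewrite !tail_gf_closed_form // /geom_sol num q_r1 D_r1 pow_inv pow_add /=.
by field; do ![split] => //; apply: pow_nonzero.
Qed.

End KernelRoot.

Lemma sum_f_R0_pow0 (f : nat -> R) n : sum_f_R0 (fun i => f i * 0 ^ i) n = f 0%nat.
Proof. by elim: n => [|n IH] /=; rewrite ?IH; ring. Qed.

Theorem theorem2 :
  exists delta : R, 0 < delta /\
  (forall z u : R, z <> 0 -> Rabs z < delta -> Rabs u < delta ->
     let W := sqrt (1 - 6 * z ^ 2 + 5 * z ^ 4) in
     let r1 := (1 + z ^ 2 + W) / (2 * z) in
     is_series (fun n : nat => sum_n (fun j : nat => INR (s n j) * u ^ j) n * z ^ n)
       ((3 - 3 * z ^ 2 - W) / (2 * z * r1 * (1 - u / r1)))) /\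
  (forall (j : nat) (z : R), z <> 0 -> Rabs z < delta ->
     let W := sqrt (1 - 6 * z ^ 2 + 5 * z ^ 4) in
     let r1 := (1 + z ^ 2 + W) / (2 * z) in
     is_series (fun n : nat => INR (s n j) * z ^ n)
       ((3 - 3 * z ^ 2 - W) / (2 * z * r1 ^ (j + 1)))).
Proof.
exists (/ 3); split; first lra.
have sqrt_disc z : Rabs z < / 3 ->
    0 <= sqrt (1 - 6 * z ^ 2 + 5 * z ^ 4) /\
    sqrt (1 - 6 * z ^ 2 + 5 * z ^ 4) ^ 2 = 1 - 6 * z ^ 2 + 5 * z ^ 4.
  move=> z_small; split; first exact: sqrt_pos.
  rewrite pow2_sqrt //.
  have : z ^ 2 < / 9 by rewrite -pow2_abs; have := Rabs_pos z; nra.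
  nra.
split.
- move=> z u z_neq0 z_small u_small W r1.
  have [W_ge0 W_sq] := sqrt_disc z z_small.
  have u_le1 : Rabs u <= 1 by lra.
  have := is_series_s_tail_gf u z u_le1 z_small 0.
  rewrite (tail_gf_sum z W W_ge0 W_sq z_small z_neq0 u 0 u_le1) add0n pow_1 => sum_s.
  apply: is_series_ext sum_s => n.
  by rewrite sum_n_Reals; congr (_ * _); apply: PartSum.sum_eq => i _; rewrite addn0.
- move=> j z z_neq0 z_small W r1.
  have [W_ge0 W_sq] := sqrt_disc z z_small.
  have u_le1 : Rabs 0 <= 1 by rewrite Rabs_R0; lra.
  have := is_series_s_tail_gf 0 z u_le1 z_small j.
  rewrite (tail_gf_sum z W W_ge0 W_sq z_small z_neq0 0 j u_le1) Rdiv_0_l Rminus_0_r Rmult_1_r.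
  by move=> sum_s; apply: is_series_ext sum_s => n; rewrite sum_f_R0_pow0.
Qed.
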